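(* If $G$ is a bridgeless cubic graph, then $\omega'(G)\leq \frac{2}{3}\mu'_3(G)$.
   Context: A join of a graph $H$ is a set $J\subseteq E(H)$ such that every vertex has degree of the same parity in $H$ and in the spanning subgraph $(V(H),J)$. In a cubic graph every vertex has degree $1$ or $3$ in a join $J$; a vertex of degree $3$ in $J$ is a $J$-vertex and $n(J)$ is the number of $J$-vertices. The weak oddness $\omega'(G)$ is the minimum, over all joins $J$ of $G$, of the number of components with an odd number of vertices of the complement $(V(G),E(G)\setminus J)$. Given three joins $J_1,J_2,J_3$ of $G$, let $E_0$ be the set of edges lying in none of them; the weak core with respect to them is $G[E_0\cup E_2\cup E_3]$ (where $E_i$ is the set of edges in exactly $i$ of the joins), and it is called a weak $l$-core with $l=|E_0|+\frac{3}{2}\sum_{i=1}^3 n(J_i)$. Then $\mu'_3(G)$ is the minimum $l$ such that $G$ has a weak $l$-core, i.e. the minimum of $|E_0|+\frac{3}{2}\sum_{i=1}^3 n(J_i)$ over all triples of joins $J_1,J_2,J_3$ of $G$. *)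

From HB Require Import structures.
From mathcomp Require Import all_boot all_order all_algebra.
Set Implicit Arguments. Unset Strict Implicit. Unset Printing Implicit Defensive.
Import Order.TTheory GRing.Theory Num.Theory.

Record mgraph := MGraph {
  gV : finType;
  gE : finType;
  ends : gE -> gV * gV;
  loopless : forall e, (ends e).1 != (ends e).2
}.

Section Defs.
Variable G : mgraph.
Local Notation V := (gV G).
Local Notation E := (gE G).

Definition inc (e : E) (v : V) : bool :=
  ((ends e).1 == v) || ((ends e).2 == v).

Definition deg_in (F : {set E}) (v : V) : nat := #|[set e in F | inc e v]|.

Definition cubic : Prop := forall v : V, deg_in [set: E] v = 3.

Definition adj_in (F : {set E}) : rel V :=
  fun x y => [exists e in F, (ends e == (x, y)) || (ends e == (y, x))].

Definition bridgeless : Prop :=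
  forall e : E, connect (adj_in ([set: E] :\ e)) (ends e).1 (ends e).2.

Definition is_join (J : {set E}) : bool :=
  [forall v : V, odd (deg_in J v) == odd (deg_in [set: E] v)].

Definition nJ (J : {set E}) : nat := #|[set v : V | deg_in J v == 3]|.

Definition components (F : {set E}) : {set {set V}} :=
  [set [set y | connect (adj_in F) x y] | x : V].

Definition odd_comps (F : {set E}) : nat :=
  #|[set C in components F | odd #|C|]|.

Definition oddJ (J : {set E}) : nat := odd_comps (~: J).

(* weak oddness: minimum of oddJ over all joins ([set: E] is a join) *)
Definition weak_oddness : nat :=
  oddJ [arg min_(J < [set: E] | is_join J) oddJ J].

Definition triple := ({set E} * {set E} * {set E})%type.

Definition E0 (t : triple) : {set E} := ~: (t.1.1 :|: t.1.2 :|: t.2).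

Definition core_l (t : triple) : rat :=
  (#|E0 t|%:R + (3%:R / 2%:R) * (nJ t.1.1 + nJ t.1.2 + nJ t.2)%:R)%R.

(* 2 l, a natural number, used to select a minimizer *)
Definition core_l2 (t : triple) : nat :=
  2 * #|E0 t| + 3 * (nJ t.1.1 + nJ t.1.2 + nJ t.2).

Definition joins3 (t : triple) : bool :=
  [&& is_join t.1.1, is_join t.1.2 & is_join t.2].

Definition mu3' : rat :=
  core_l [arg min_(t < ([set: E], [set: E], [set: E]) | joins3 t) core_l2 t].

End Defs.

From HB Require Import structures.
From mathcomp Require Import all_boot all_order all_algebra.
From mathcomp Require Import zify lra.
Import Order.TTheory GRing.Theory Num.Theory.
Set Implicit Arguments. Unset Strict Implicit. Unset Printing Implicit Defensive.

(** Since [weak_oddness G] is at most the number of odd components of [G - J] for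
   every join [J], it suffices to show, for any three joins [J_0, J_1, J_2] of a cubic
   graph, that their numbers of odd components add up to at most
   [3 (n(J_0) + n(J_1) + n(J_2)) + 2 |E_0|]. This is a discharging argument: vertex [v]
   gives join [J_i] a charge so that every odd component of [G - J_i] collects at least
   1, while [v] gives away at most 3 per join in which it has degree 3, plus 1 if it
   lies on an edge of [E_0]. An odd component without [J]-vertices is an odd cycle;
   counting, for [j <> i], the vertices of the cycle whose [J_i]-edge also lies in
   [J_j] shows that the cycle contains two vertices whose [J_i]-edge lies in exactly
   two joins, or one whose [J_i]-edge lies in all three. *)

Section Graph.
Variable G : mgraph.
Local Notation V := (gV G).
Local Notation E := (gE G).

Lemma adj_in_sym (F : {set E}) : symmetric (adj_in F).
Proof.
by move=> x y; apply/existsP/existsP => -[e /andP[eF He]]; exists e; rewrite eF orbC.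
Qed.

Definition component (F : {set E}) (x : V) : {set V} := [set y | connect (adj_in F) x y].

Lemma mem_component F x : x \in component F x.
Proof. by rewrite inE connect0. Qed.

Lemma component_eq F x y : y \in component F x -> component F y = component F x.
Proof.
rewrite inE => cxy; apply/setP => z; rewrite !inE.
by rewrite (same_connect (sym_connect_sym (@adj_in_sym F)) cxy).
Qed.

Lemma component_adj F x y z :
  adj_in F y z -> (y \in component F x) = (z \in component F x).
Proof.
move=> yz; rewrite !inE; apply: same_connect_r; first exact/sym_connect_sym/adj_in_sym.
exact: connect1.
Qed.

Lemma component_ind F u (P : pred V) :
  (forall y z, y \in component F u -> adj_in F y z -> P y -> P z) ->
  P u -> {in component F u, forall v, P v}.
Proof.
move=> step Pu v uv.
have closedP : closed (adj_in F) [pred y | (y \in component F u) && P y].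
  move=> y z yz; rewrite !unfold_in /= -(component_adj u yz).
  case: (y \in component F u)/idP => //= yu; apply/idP/idP; first exact: step yu yz.
  by apply: step; rewrite -?(component_adj u yz) // adj_in_sym.
move: (uv); rewrite inE => /(closed_connect closedP).
by rewrite [u \in _]inE [v \in _]inE /= mem_component uv Pu => /esym.
Qed.

Lemma componentsE (F : {set E}) : components F = [set component F x | x : V].
Proof. by []. Qed.

Lemma components_trivIset (F : {set E}) : trivIset (components F).
Proof.
rewrite componentsE; apply/trivIsetP => _ _ /imsetP[x _ ->] /imsetP[y _ ->] xy.
apply/pred0P => z /=; apply: contraNF xy => /andP[zx zy].
by rewrite -(component_eq zx) (component_eq zy).
Qed.

Lemma incE (e : E) (v : V) : inc e v = (v == (ends e).1) || (v == (ends e).2).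
Proof. by rewrite /inc ![_ == v]eq_sym. Qed.

Lemma card_inc (e : E) : #|[set v | inc e v]| = 2.
Proof.
have -> : [set v | inc e v] = [set (ends e).1; (ends e).2].
  by apply/setP => v; rewrite !inE incE.
by rewrite cards2 (loopless e).
Qed.

Lemma inc_other_end (e : E) (u : V) : inc e u -> exists2 w, inc e w & u != w.
Proof.
rewrite incE => /orP[]/eqP->.
  by exists (ends e).2; [rewrite incE eqxx orbT | exact: loopless].
by exists (ends e).1; [rewrite incE eqxx | rewrite eq_sym; exact: loopless].
Qed.

Lemma adj_inP (F : {set E}) (x y : V) :
  reflect (exists e, [/\ e \in F, inc e x, inc e y & x != y]) (adj_in F x y).
Proof.
apply: (iffP existsP) => [[e /andP[eF /orP[]/eqP He]]|[e [eF]]].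
- exists e; rewrite /inc He /= !eqxx ?orbT.
  by have := loopless e; rewrite He.
- exists e; rewrite /inc He /= !eqxx ?orbT.
  by have := loopless e; rewrite He eq_sym.
rewrite !incE => /orP[]/eqP-> /orP[]/eqP->; rewrite ?eqxx // => _;
  by exists e; rewrite eF -surjective_pairing eqxx ?orbT.
Qed.

Lemma sum_deg_in (F : {set E}) (C : {set V}) :
  \sum_(v in C) deg_in F v = \sum_(e in F) #|[set v in C | inc e v]|.
Proof.
under eq_bigr do rewrite /deg_in -sum1_card.
rewrite (exchange_big_dep (mem F)) /=; last by move=> v e _; rewrite inE => /andP[].
by apply: eq_bigr => e eF; rewrite -sum1_card; apply: eq_bigl => v; rewrite !inE eF.
Qed.

Lemma handshake (F : {set E}) : \sum_v deg_in F v = 2 * #|F|.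
Proof.
rewrite (eq_bigl (fun v => v \in [set: V])) => [|v]; last by rewrite in_setT.
rewrite sum_deg_in -sum1_card big_distrr /=; apply: eq_bigr => e _.
by rewrite muln1 -(card_inc e); apply: eq_card => v; rewrite !inE.
Qed.

Lemma closed_sum_deg_even (F : {set E}) (C : {set V}) :
  {in F, forall e, ((ends e).1 \in C) = ((ends e).2 \in C)} ->
  ~~ odd (\sum_(v in C) deg_in F v).
Proof.
move=> closedC; rewrite sum_deg_in; elim/big_ind: _ => //.
  by move=> a b /negbTE oa /negbTE ob; rewrite oddD oa ob.
move=> e /closedC sameC.
suff -> : #|[set v in C | inc e v]| = 2 * ((ends e).1 \in C) by rewrite oddM.
case e1C: ((ends e).1 \in C); rewrite ?muln0 -?(card_inc e) ?muln1 -?(cards0 V).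
  apply: eq_card => v; rewrite !inE incE andb_idl //.
  by case/orP => /eqP->; rewrite -?sameC.
apply: eq_card => v; rewrite !inE incE.
apply/negP => /andP[vC /orP[]/eqP Ev]; move: e1C; [by rewrite -Ev vC|].
by rewrite sameC -Ev vC.
Qed.

End Graph.

Lemma card_set_in_sum (T : finType) (A : {set T}) (b : pred T) :
  #|[set v in A | b v]| = \sum_(v in A) b v.
Proof.
rewrite -sum1_card big_mkcond [RHS]big_mkcond; apply: eq_bigr => v _; rewrite inE.
by case: (v \in A); case: (b v).
Qed.

Lemma ord3_cover (i j k l : 'I_3) : i != j -> i != k -> j != k ->
  [|| l == i, l == j | l == k].
Proof. by rewrite -!val_eqE /=; move: (ltn_ord i) (ltn_ord j) (ltn_ord k) (ltn_ord l); lia. Qed.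

Lemma ord3_third (i j : 'I_3) : i != j -> exists2 k : 'I_3, i != k & j != k.
Proof.
move=> ij; exists (inord (3 - i - j)); rewrite -val_eqE /= inordK;
  move: ij (ltn_ord i) (ltn_ord j); rewrite -val_eqE /=; lia.
Qed.

Lemma ord3_distinct (i : 'I_3) : exists j k : 'I_3, [/\ i != j, i != k & j != k].
Proof.
have [j ij] : exists j : 'I_3, i != j.
  by exists (inord (1 - i)); rewrite -val_eqE /= inordK; move: (ltn_ord i); lia.
by have [k ik jk] := ord3_third ij; exists j, k.
Qed.

Section ThreeValues.
Variables (T : eqType) (g : 'I_3 -> T).

Definition cnt (x : T) : nat := \sum_(l < 3) (g l == x).

Section Distinct.
Variables i j k : 'I_3.
Hypotheses (ij : i != j) (ik : i != k) (jk : j != k).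

Lemma big_ord3 (f : 'I_3 -> nat) : \sum_(l < 3) f l = f i + f j + f k.
Proof.
rewrite (bigD1 i) // (bigD1 j) 1?eq_sym // (bigD1 k) 1?eq_sym ?ik 1?eq_sym ?jk //.
rewrite big1 /= ?addn0 ?addnA // => l /andP[/andP[li lj] lk].
by have := ord3_cover l ij ik jk; rewrite (negbTE li) (negbTE lj) (negbTE lk).
Qed.

Lemma cntE x : cnt x = (g i == x) + (g j == x) + (g k == x).
Proof. exact: big_ord3. Qed.

Lemma injectivebE : injectiveb g = [&& g i != g j, g i != g k & g j != g k].
Proof.
apply/injectiveP/and3P => [inj_g|[gij gik gjk] l l' gl].
  by split; apply/eqP => /inj_g E; [move: ij | move: ik | move: jk]; rewrite E eqxx.
by case/or3P: (ord3_cover l ij ik jk) => /eqP El; case/or3P: (ord3_cover l' ij ik jk) => /eqP El';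
   subst l l'; rewrite // gl eqxx in gij gik gjk *.
Qed.

Local Ltac cases3 a b c :=
  case: (eqVneq a b) => [?|?]; case: (eqVneq a c) => [?|?]; case: (eqVneq b c) => [?|?];
  rewrite /= //; try subst;
  try match goal with H : is_true (?x != ?x) |- _ => by rewrite eqxx in H end;
  rewrite ?eqxx //.

Local Ltac cases4 a b c x :=
  case: (eqVneq a x) => [?|?]; case: (eqVneq b x) => [?|?]; case: (eqVneq c x) => [?|?];
  cases3 a b c.

Lemma cnt_noninj x : 1 < cnt x -> ~~ injectiveb g.
Proof. rewrite cntE injectivebE; move: (g i) (g j) (g k) => a b c; cases4 a b c x. Qed.

Lemma cnt3_const x l : cnt x = 3 -> g l = x.
Proof.
rewrite cntE; case/or3P: (ord3_cover l ij ik jk) => /eqP->;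
  move: (g i) (g j) (g k) => a b c; cases4 a b c x.
Qed.

Lemma injectiveb_cnt l : injectiveb g -> cnt (g l) = 1.
Proof.
rewrite injectivebE; case/or3P: (ord3_cover l ij ik jk) => /eqP->; rewrite cntE;
  move: (g i) (g j) (g k) => a b c; cases3 a b c.
Qed.

Lemma count_cnt2_le2 : \sum_(l < 3) (cnt (g l) == 2) <= 2.
Proof. rewrite big_ord3 !cntE; move: (g i) (g j) (g k) => a b c; cases3 a b c. Qed.

Lemma cnt_pairs :
  (g i == g j) + (g i == g k) = (cnt (g i) == 2) + 2 * (cnt (g i) == 3).
Proof. rewrite !cntE; move: (g i) (g j) (g k) => a b c; cases3 a b c. Qed.

Lemma noninj_cnt3 : ~~ injectiveb g -> cnt (g i) != 2 -> cnt (g j) != 2 -> cnt (g i) = 3.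
Proof. rewrite injectivebE !cntE; move: (g i) (g j) (g k) => a b c; cases3 a b c. Qed.

Lemma noninj_cnt2 : cnt (g j) = 1 -> ~~ injectiveb g -> cnt (g i) = 2.
Proof. rewrite injectivebE !cntE; move: (g i) (g j) (g k) => a b c; cases3 a b c. Qed.

End Distinct.

End ThreeValues.

Section Joins.
Variable G : mgraph.
Local Notation V := (gV G).
Local Notation E := (gE G).
Hypothesis cubicG : cubic G.
Variable J : 'I_3 -> {set E}.
Hypothesis joinJ : forall i, is_join (J i).

Lemma deg_in_le3 (F : {set E}) (v : V) : deg_in F v <= 3.
Proof.
rewrite -(cubicG v); apply: subset_leq_card; apply/subsetP => e.
by rewrite !inE => /andP[_ ->].
Qed.

Lemma deg_join i v : (deg_in (J i) v == 1) || (deg_in (J i) v == 3).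
Proof.
have := forallP (joinJ i) v; rewrite cubicG /= => /eqP.
by have := deg_in_le3 (J i) v; case: (deg_in (J i) v) => [|[|[|[|]]]].
Qed.

Lemma card_edges_at (v : V) : #|[set e : E | inc e v]| = 3.
Proof. by rewrite -(cubicG v); apply: eq_card => e; rewrite !inE. Qed.

Definition mult (e : E) : nat := \sum_(i < 3) (e \in J i).

Definition E0J : {set E} := [set e | mult e == 0].

Definition normal (v : V) : bool := [forall i, deg_in (J i) v == 1].

Definition doubled i (v : V) : bool := [exists e, [&& e \in J i, inc e v & mult e == 2]].

Definition tripled (v : V) : bool := [exists e, inc e v && (mult e == 3)].

Definition on_E0 (v : V) : bool := 0 < deg_in E0J v.

Definition shared i j (v : V) : bool := [exists e, [&& e \in J i, e \in J j & inc e v]].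

Definition jedges (v : V) (g : 'I_3 -> E) : Prop :=
  forall i e, (e \in J i) && inc e v = (e == g i).

Lemma normal_jedges v : normal v -> exists g, jedges v g.
Proof.
move=> /forallP nv.
have /fin_all_exists[g vg] : forall i, exists x, [set e in J i | inc e v] = [set x].
  by move=> i; apply/cards1P/nv.
by exists g => i e; have := f_equal (fun A : {set E} => e \in A) (vg i); rewrite !inE.
Qed.

Section NormalVertex.
Variables (v : V) (g : 'I_3 -> E).
Hypothesis vg : jedges v g.

Lemma jedge_in i : g i \in J i.
Proof. by have := vg i (g i); rewrite eqxx => /andP[]. Qed.

Lemma jedge_inc i : inc (g i) v.
Proof. by have := vg i (g i); rewrite eqxx => /andP[]. Qed.

Lemma jedge_uniq i e : e \in J i -> inc e v -> e = g i.
Proof. by move=> ei ev; apply/eqP; rewrite -vg ei ev. Qed.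

Lemma mult_jedges e : inc e v -> mult e = cnt g e.
Proof. by move=> ev; apply: eq_bigr => i _; rewrite eq_sym -vg ev andbT. Qed.

Lemma doubledE i : doubled i v = (cnt g (g i) == 2).
Proof.
apply/existsP/idP => [[e /and3P[ei ev /eqP me]]|c2].
  by rewrite -(jedge_uniq ei ev) -mult_jedges ?me.
by exists (g i); rewrite jedge_in jedge_inc mult_jedges ?jedge_inc.
Qed.

Lemma tripledE i : tripled v = (cnt g (g i) == 3).
Proof.
apply/existsP/idP => [[e /andP[ev /eqP]]|c3]; last first.
  by exists (g i); rewrite jedge_inc mult_jedges ?jedge_inc.
rewrite (mult_jedges ev) => c3; have [j [k [ij ik jk]]] := ord3_distinct i.
by rewrite (cnt3_const ij ik jk i c3) c3.
Qed.

Lemma sharedE i j : shared i j v = (g i == g j).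
Proof.
apply/existsP/eqP => [[e /and3P[ei ej ev]]|gij].
  by rewrite -(jedge_uniq ei ev) -(jedge_uniq ej ev).
by exists (g i); rewrite jedge_in jedge_inc gij jedge_in.
Qed.

Lemma deg_jedge_diff i j : deg_in (J j :\: J i) v + shared i j v = 1.
Proof.
rewrite sharedE; case: (eqVneq (g i) (g j)) => [gij|gij] /=.
  rewrite addn1; congr _.+1; apply/eqP; rewrite cards_eq0; apply/eqP/setP => e.
  rewrite !inE; apply/negP => /andP[/andP[eNi ej] ev].
  by move: eNi; rewrite (jedge_uniq ej ev) -gij jedge_in.
rewrite addn0; apply/eqP/cards1P; exists (g j); apply/setP => e; rewrite !inE.
apply/idP/eqP => [/andP[/andP[_ ej] ev]|->]; first exact: jedge_uniq.
rewrite jedge_in jedge_inc !andbT; apply/negP => gji.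
by move: gij; rewrite (jedge_uniq gji (jedge_inc j)) eqxx.
Qed.

Lemma jedges_image : g @: [set: 'I_3] \subset [set e | inc e v].
Proof. by apply/subsetP => e /imsetP[l _ ->]; rewrite inE jedge_inc. Qed.

Lemma injectiveb_jedges : injectiveb g = (g @: [set: 'I_3] == [set e | inc e v]).
Proof.
rewrite eqEcard jedges_image card_edges_at /=.
apply/injectiveP/idP => [inj_g|]; first by rewrite card_imset // cardsT card_ord.
move=> c3; have /imset_injP inj_g : #|g @: [set: 'I_3]| == #|[set: 'I_3]|.
  by have := leq_imset_card g [set: 'I_3]; rewrite cardsT card_ord eqn_leq c3 => ->.
by move=> l l'; apply: inj_g; rewrite inE.
Qed.

Lemma jedge_surj e : injectiveb g -> inc e v -> exists l, e = g l.
Proof.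
rewrite injectiveb_jedges => /eqP img ev.
have /imsetP[l _ ->] : e \in g @: [set: 'I_3] by rewrite img inE.
by exists l.
Qed.

Lemma on_E0E : on_E0 v = ~~ injectiveb g.
Proof.
rewrite injectiveb_jedges eqEsubset jedges_image /= /on_E0 /deg_in card_gt0.
apply/set0Pn/subsetPn => [[e]|[e ev /imsetP gNe]].
  rewrite !inE => /andP[/eqP m0 ev]; exists e; rewrite ?inE //; apply/imsetP => -[l _ el].
  by move: m0; rewrite (mult_jedges ev) /cnt (bigD1 l) //= -el eqxx.
rewrite inE in ev; exists e; rewrite !inE ev andbT (mult_jedges ev) /cnt.
apply/eqP/big1 => l _; apply/eqP; rewrite eqb0; apply/eqP => gle.
by apply: gNe; exists l; rewrite ?in_setT.
Qed.

End NormalVertex.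

Lemma normal_on_E0 v i : normal v -> doubled i v || tripled v -> on_E0 v.
Proof.
case/normal_jedges => g vg; have [j [k [ij ik jk]]] := ord3_distinct i.
rewrite (doubledE vg) (tripledE vg i) (on_E0E vg) => c23.
by apply: (cnt_noninj ij ik jk (x := g i)); case/orP: c23 => /eqP->.
Qed.

Lemma normal_doubled_tripled v i : normal v -> doubled i v -> ~~ tripled v.
Proof. by case/normal_jedges => g vg; rewrite (doubledE vg) (tripledE vg i) => /eqP->. Qed.

Lemma undoubled_tripled i j y : i != j -> normal y -> on_E0 y ->
  ~~ doubled i y -> ~~ doubled j y -> tripled y.
Proof.
move=> ij /normal_jedges[g vg]; have [k ik jk] := ord3_third ij.
rewrite (on_E0E vg) !(doubledE vg) (tripledE vg i) => nonj di dj.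
by rewrite (noninj_cnt3 ij ik jk).
Qed.

Lemma tripled_adj i j y z : normal y -> tripled y ->
  adj_in (~: J i) y z -> adj_in (~: J j) y z.
Proof.
case/normal_jedges => g vg; rewrite (tripledE vg i) => /eqP c3.
case/adj_inP => e [eNi ey ez yz]; apply/adj_inP; exists e; split=> //.
rewrite !inE in eNi *; apply: contra eNi => ej.
have [j' [k [ij' ik j'k]]] := ord3_distinct i.
by rewrite (jedge_uniq vg ej ey) (cnt3_const ij' ik j'k j c3) (jedge_in vg).
Qed.

Lemma off_E0_adj i y z : adj_in (~: J i) y z -> normal y -> normal z ->
  ~~ doubled i z -> ~~ on_E0 y -> ~~ on_E0 z.
Proof.
case/adj_inP => e [eNi ey ez _] /normal_jedges[gy vgy] /normal_jedges[gz vgz].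
rewrite inE in eNi; rewrite (on_E0E vgy) negbK (doubledE vgz) (on_E0E vgz) => Nd inj_y.
have [l el] := jedge_surj vgy inj_y ey.
have [j [k [lj lk jk]]] := ord3_distinct l.
have m1 : mult e = 1 by rewrite (mult_jedges vgy ey) el (injectiveb_cnt lj lk jk).
have il : i != l by apply: contraNneq eNi => ->; rewrite el (jedge_in vgy).
have [k' ik' lk'] := ord3_third il.
have ezl : e = gz l by apply: (jedge_uniq vgz) => //; rewrite el (jedge_in vgy).
apply: contra Nd => nonj; rewrite (noninj_cnt2 il ik' lk') //.
by rewrite -ezl -(mult_jedges vgz ez).
Qed.

Lemma E0J_notin e i : e \in E0J -> e \notin J i.
Proof.
rewrite inE => /eqP m0; apply/negP => ei.
by move: m0; rewrite /mult (bigD1 i) //= ei.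
Qed.

Lemma shared_doubled_tripled i j k v : i != j -> i != k -> j != k -> normal v ->
  shared i j v + shared i k v = doubled i v + 2 * tripled v.
Proof.
move=> ij ik jk /normal_jedges[g vg].
by rewrite !(sharedE vg) (doubledE vg) (tripledE vg i) (cnt_pairs g ij ik jk).
Qed.

Lemma card_doubled_le2 v : normal v -> #|[set i | doubled i v]| <= 2.
Proof.
case/normal_jedges => g vg; have [j [k [ij ik jk]]] := ord3_distinct ord0.
suff -> : #|[set i | doubled i v]| = \sum_(l < 3) (cnt g (g l) == 2).
  exact: count_cnt2_le2 ij ik jk.
rewrite -sum1dep_card big_mkcond /=.
by apply: eq_bigr => l _; rewrite (doubledE vg); case: (_ == 2).
Qed.

Definition Jcomp i (x : V) : {set V} := component (~: J i) x.

Definition special i (S : {set V}) : bool :=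
  [forall v in S, [&& normal v, on_E0 v & ~~ doubled i v]].

Definition nspecial (v : V) : nat := #|[set j | special j (Jcomp j v)]|.

Definition charge i (v : V) : rat :=
  (if ~~ normal v then 1 else if doubled i v then 2%:R^-1
   else if tripled v && special i (Jcomp i v) then (nspecial v)%:R^-1 else 0)%R.

Lemma charge_ge0 i v : (0 <= charge i v)%R.
Proof. by rewrite /charge; do 3!case: ifP => _ //; rewrite invr_ge0 ler0n. Qed.

Lemma sum_charge_normal v : normal v -> (\sum_i charge i v <= (on_E0 v)%:R)%R.
Proof.
move=> nv; case tv: (tripled v).
  have -> : (\sum_i charge i v =
             \sum_(i in [set j | special j (Jcomp j v)]) (nspecial v)%:R^-1)%R.
    rewrite [RHS]big_mkcond; apply: eq_bigr => i _; rewrite /charge nv tv inE /=.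
    by case: ifP => // di; move: tv; rewrite (negbTE (normal_doubled_tripled nv di)).
  rewrite sumr_const -/(nspecial v) (@normal_on_E0 v ord0) ?tv ?orbT //.
  case: (nspecial v) => [|n]; rewrite ?mulr0n //.
  by rewrite -[X in (X <= _)%R]mulr_natr mulVf ?pnatr_eq0.
have -> : (\sum_i charge i v = \sum_(i in [set j | doubled j v]) 2%:R^-1)%R.
  rewrite [RHS]big_mkcond; apply: eq_bigr => i _; rewrite /charge nv tv inE /=.
  by case: ifP.
rewrite sumr_const; case: (set_0Vmem [set j | doubled j v]) => [->|[i]].
  by rewrite cards0 mulr0n.
rewrite inE => di; rewrite (@normal_on_E0 v i) ?di //.
have : (#|[set j | doubled j v]|%:R <= 2%:R :> rat)%R by rewrite ler_nat card_doubled_le2.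
rewrite -[X in (X <= _)%R]mulr_natr /=; lra.
Qed.

Lemma sum_charge_le v :
  (\sum_i charge i v <=
   3%:R * #|[set i | deg_in (J i) v == 3]|%:R + (deg_in E0J v)%:R)%R.
Proof.
case nv: (normal v).
  apply: le_trans (sum_charge_normal nv) _; apply: ler_wpDl; first by rewrite mulr_ge0.
  by rewrite ler_nat /on_E0; case: ltnP.
have [i Ji3] : exists i, deg_in (J i) v == 3.
  move/negbT: nv; rewrite negb_forall => /existsP[i d1]; exists i.
  by have := deg_join i v; rewrite (negbTE d1).
rewrite /charge nv sumr_const card_ord; apply: ler_wpDr; first by rewrite ler0n.
rewrite -natrM ler_nat -[X in X <= _]muln1 leq_mul2l /= card_gt0.
by apply/set0Pn; exists i; rewrite inE.
Qed.

Lemma Jcomp_eq i x y : y \in Jcomp i x -> Jcomp i y = Jcomp i x.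
Proof. exact: component_eq. Qed.

Lemma Jcomp_adj i x y z : adj_in (~: J i) y z -> (y \in Jcomp i x) = (z \in Jcomp i x).
Proof. exact: component_adj. Qed.

Lemma Jcomp_edge i x e :
  e \notin J i -> ((ends e).1 \in Jcomp i x) = ((ends e).2 \in Jcomp i x).
Proof.
move=> eNi; apply: Jcomp_adj; apply/adj_inP; exists e; split; rewrite ?inE ?loopless //.
  by rewrite incE eqxx.
by rewrite incE eqxx orbT.
Qed.

Lemma odd_Jcomp_shared i j x : i != j -> {in Jcomp i x, forall v, normal v} ->
  odd #|Jcomp i x| = odd #|[set v in Jcomp i x | shared i j v]|.
Proof.
move=> ij nC.
have sum1 : \sum_(v in Jcomp i x) (deg_in (J j :\: J i) v + shared i j v) = #|Jcomp i x|.
  by rewrite -sum1_card; apply: eq_bigr => v /nC/normal_jedges[g vg]; apply: deg_jedge_diff.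
rewrite -sum1 big_split /= oddD (negbTE (closed_sum_deg_even _)) /=; last first.
  by move=> e; rewrite inE => /andP[eNi _]; apply: Jcomp_edge.
by rewrite card_set_in_sum.
Qed.

Lemma odd_Jcomp_undoubled i x : {in Jcomp i x, forall v, normal v} -> odd #|Jcomp i x| ->
  #|[set v in Jcomp i x | doubled i v]| <= 1 ->
  {in Jcomp i x, forall v, ~~ doubled i v} /\ exists2 u, u \in Jcomp i x & tripled u.
Proof.
move=> nC oC le1; have [j [k [ij ik jk]]] := ord3_distinct i.
have count_eq : #|[set v in Jcomp i x | shared i j v]| + #|[set v in Jcomp i x | shared i k v]|
    = #|[set v in Jcomp i x | doubled i v]| + 2 * #|[set v in Jcomp i x | tripled v]|.
  rewrite !card_set_in_sum -big_split big_distrr -big_split /=.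
  by apply: eq_bigr => v /nC; apply: shared_doubled_tripled.
move: count_eq (odd_Jcomp_shared ij nC) (odd_Jcomp_shared ik nC) le1; rewrite oC.
set a := #|_|; set b := #|_|; set w := #|_|; set t := #|_| => count_eq oa ob le1.
have w0 : w = 0.
  move: le1 (congr1 odd count_eq); rewrite oddD -oa -ob oddD oddM /= addbF.
  by case: (w) => [|[|]].
split.
  move=> v vC; apply: contraT; rewrite negbK => dv.
  by move: w0; rewrite /w (cardsD1 v) inE vC dv.
have : 0 < t by move: count_eq oa; rewrite w0 /=; case: (t) => //; case: (a).
by case/card_gt0P => u; rewrite inE => /andP[uC tu]; exists u.
Qed.

Lemma special_Jcomp i u :
  {in Jcomp i u, forall v, normal v} -> {in Jcomp i u, forall v, ~~ doubled i v} ->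
  tripled u -> special i (Jcomp i u).
Proof.
move=> nC dC tu.
have E0C : {in Jcomp i u, forall v, on_E0 v}.
  apply: component_ind; last by apply: (@normal_on_E0 u i); rewrite ?tu ?orbT ?nC ?mem_component.
  move=> y z yC yz; have zC : z \in Jcomp i u by rewrite -(Jcomp_adj _ yz).
  apply: contraLR => z0; apply: (off_E0_adj (i := i) (y := z)); rewrite ?nC ?dC //.
  by rewrite adj_in_sym.
by apply/forall_inP => v vC; rewrite nC ?E0C ?dC.
Qed.

Lemma special2_tripled i j u : i != j ->
  special i (Jcomp i u) -> special j (Jcomp j u) -> {in Jcomp i u, forall v, tripled v}.
Proof.
move=> ij /forall_inP spi /forall_inP spj.
have tripled_in v : v \in Jcomp i u -> v \in Jcomp j u -> tripled v.
  move=> /spi/and3P[nv E0v di] /spj/and3P[_ _ dj]; exact: undoubled_tripled ij nv E0v di dj.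
have sub : {in Jcomp i u, forall v, v \in Jcomp j u}.
  apply: component_ind; last exact: mem_component.
  move=> y z yC yz yCj; have /and3P[ny _ _] := spi y yC.
  by rewrite -(Jcomp_adj _ (@tripled_adj i j y z ny (tripled_in y yC yCj) yz)).
by move=> v vC; apply: tripled_in (sub v vC).
Qed.

Lemma Jcomp_card_ge3 i u : odd #|Jcomp i u| -> on_E0 u -> 3 <= #|Jcomp i u|.
Proof.
move=> oC; rewrite /on_E0 card_gt0 => /set0Pn[e]; rewrite inE => /andP[e0 eu].
have [w ew uw] := inc_other_end eu.
have : 1 < #|Jcomp i u|.
  apply/card_gt1P; exists u, w; split; rewrite ?mem_component //.
  rewrite -(Jcomp_adj _ (y := u)) ?mem_component //.
  by apply/adj_inP; exists e; rewrite inE E0J_notin.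
by move: oC; case: #|_| => [|[|[|]]].
Qed.

Lemma sum_charge_subset i (A B : {set V}) : A \subset B ->
  (\sum_(v in A) charge i v <= \sum_(v in B) charge i v)%R.
Proof.
move=> sAB; rewrite [X in (_ <= X)%R](big_setID A) /= (setIidPr sAB) lerDl.
by apply: sumr_ge0 => v _; apply: charge_ge0.
Qed.

Lemma charge_le_sum i (S : {set V}) v : v \in S ->
  (charge i v <= \sum_(w in S) charge i w)%R.
Proof.
move=> vS; have -> : charge i v = (\sum_(w in [set v]) charge i w)%R by rewrite big_set1.
by rewrite sum_charge_subset // sub1set.
Qed.

Lemma charge_special_Jcomp i u : odd #|Jcomp i u| -> special i (Jcomp i u) -> tripled u ->
  (1 <= \sum_(v in Jcomp i u) charge i v)%R.
Proof.
move=> oC spC tu; have /forall_inP spv := spC.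
have chargeE v : v \in Jcomp i u ->
    charge i v = (if tripled v then (nspecial v)%:R^-1 else 0)%R.
  move=> vC; have /and3P[nv _ dv] := spv v vC.
  by rewrite /charge nv (negbTE dv) (Jcomp_eq vC) spC andbT.
have nspecial_gt0 v : v \in Jcomp i u -> 0 < nspecial v.
  by move=> vC; apply/card_gt0P; exists i; rewrite inE (Jcomp_eq vC).
case: (boolP [exists v in Jcomp i u, tripled v && (nspecial v <= 1)]).
  case/exists_inP => v vC /andP[tv le1]; apply: le_trans (charge_le_sum i vC).
  have nv1 : nspecial v = 1 by apply/eqP; rewrite eqn_leq le1 nspecial_gt0.
  by rewrite chargeE // tv nv1 invr1.
rewrite negb_exists_in => /forall_inP gt1.
have uC := mem_component (~: J i) u.
have [j ij spj] : exists2 j, i != j & special j (Jcomp j u).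
  move: (gt1 u uC); rewrite tu -ltnNge /nspecial (cardsD1 i) inE spC add1n ltnS card_gt0.
  by case/set0Pn => j; rewrite !inE => /andP[ji spj]; exists j; rewrite 1?eq_sym.
have tC := special2_tripled ij spC spj.
have /and3P[_ E0u _] := spv u uC.
apply: (@le_trans _ _ (\sum_(v in Jcomp i u) (3%:R^-1 : rat))%R).
  rewrite sumr_const -mulr_natr.
  have : (3%:R <= #|Jcomp i u|%:R :> rat)%R by rewrite ler_nat Jcomp_card_ge3.
  lra.
apply: ler_sum => v vC; rewrite chargeE // tC // lef_pV2 ?posrE ?ltr0n ?nspecial_gt0 //.
by rewrite ler_nat; have := max_card [set j | special j (Jcomp j v)]; rewrite card_ord.
Qed.

Lemma charge_odd_Jcomp i x : odd #|Jcomp i x| -> (1 <= \sum_(v in Jcomp i x) charge i v)%R.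
Proof.
move=> oC; case: (boolP [forall v in Jcomp i x, normal v]) => [/forall_inP nC|]; last first.
  rewrite negb_forall_in => /exists_inP[v vC nv]; apply: le_trans (charge_le_sum i vC).
  by rewrite /charge nv.
set D := [set v in Jcomp i x | doubled i v].
case: (leqP 2 #|D|) => [ge2|lt2].
  have sDC : D \subset Jcomp i x by apply/subsetP => v; rewrite inE => /andP[].
  apply: le_trans (sum_charge_subset i sDC).
  rewrite (eq_bigr (fun=> 2%:R^-1)%R) => [|v]; last by rewrite inE /charge => /andP[/nC -> ->].
  rewrite sumr_const -mulr_natr; have : (2%:R <= #|D|%:R :> rat)%R by rewrite ler_nat.
  lra.
have [dC [u uC tu]] := odd_Jcomp_undoubled nC oC lt2.
rewrite -(Jcomp_eq uC) in oC nC dC *.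
by apply: charge_special_Jcomp => //; apply: special_Jcomp.
Qed.

Lemma oddJ_le_sum_charge i : ((oddJ (J i))%:R <= \sum_v charge i v)%R.
Proof.
rewrite /oddJ /odd_comps; set O := [set S in components (~: J i) | odd #|S|].
have trivO : trivIset O.
  by apply: trivIsetS (components_trivIset (~: J i)); apply/subsetP => S; rewrite inE => /andP[].
apply: (@le_trans _ _ (\sum_(S in O) \sum_(v in S) charge i v)%R).
  rewrite -sum1_card natr_sum; apply: ler_sum => S.
  by rewrite inE componentsE => /andP[/imsetP[x _ ->]]; apply: charge_odd_Jcomp.
rewrite -big_trivIset // [X in (_ <= X)%R](eq_bigl (fun v => v \in [set: V])).
  exact/sum_charge_subset/subsetT.
by move=> v; rewrite in_setT.
Qed.

Lemma sum_oddJ_le :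
  \sum_(i < 3) oddJ (J i) <= 3 * \sum_(i < 3) nJ (J i) + 2 * #|E0J|.
Proof.
rewrite -(ler_nat rat) natrD !natrM !natr_sum.
apply: (@le_trans _ _ (\sum_i \sum_v charge i v)%R).
  by apply: ler_sum => i _; apply: oddJ_le_sum_charge.
rewrite exchange_big /=; apply: le_trans (ler_sum _ (fun v _ => sum_charge_le v)) _.
rewrite big_split /= -mulr_sumr -!natr_sum handshake natrM.
suff -> : \sum_v #|[set i | deg_in (J i) v == 3]| = \sum_(i < 3) nJ (J i) by [].
under eq_bigr do rewrite -sum1_card.
rewrite (exchange_big_dep xpredT) //=; apply: eq_bigr => i _.
by rewrite /nJ -sum1_card; apply: eq_bigl => v; rewrite !inE.
Qed.

End Joins.

Definition triple_join (G : mgraph) (t : triple G) (i : 'I_3) : {set gE G} :=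
  if val i == 0 then t.1.1 else if val i == 1 then t.1.2 else t.2.

Lemma weak_oddness_le_oddJ (G : mgraph) (J : {set gE G}) :
  is_join J -> weak_oddness G <= oddJ J.
Proof.
move=> jJ; rewrite /weak_oddness.
by case: arg_minnP => [|J0 _ min_J0]; [apply/forallP | apply: min_J0].
Qed.

Lemma weak_oddness_le_core_l2 (G : mgraph) (t : triple G) :
  cubic G -> joins3 t -> 3 * weak_oddness G <= core_l2 t.
Proof.
move=> cubicG /and3P[j1 j2 j3].
have joinJ i : is_join (triple_join t i) by rewrite /triple_join; do 2?case: ifP.
have E0E : E0J (triple_join t) = E0 t.
  apply/setP => e; rewrite !inE /mult !big_ord_recl big_ord0 /=.
  by case: (e \in t.1.1); case: (e \in t.1.2); case: (e \in t.2).
have := sum_oddJ_le cubicG joinJ; rewrite E0E !big_ord_recl !big_ord0 /triple_join /= /core_l2.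
have := weak_oddness_le_oddJ j1; have := weak_oddness_le_oddJ j2; have := weak_oddness_le_oddJ j3.
lia.
Qed.

Theorem corollary2p4 (G : mgraph) :
  cubic G -> bridgeless G ->
  ((weak_oddness G)%:R <= (2%:R / 3%:R) * mu3' G :> rat)%R.
Proof.
move=> cubicG _; rewrite /mu3'.
case: arg_minnP => [|t jt _]; first by apply/and3P; split; apply/forallP.
have : ((3 * weak_oddness G)%:R <= (core_l2 t)%:R :> rat)%R.
  by rewrite ler_nat weak_oddness_le_core_l2.
rewrite /core_l2 /core_l !natrD.
lra.
Qed.
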